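(* Let $\mathcal{D}\subseteq\mathbb{C}$ and let $F:\mathcal{D}\rightarrow M_{n\times n}(\mathbb{C})$ be defined by $F(x)=\sum_{k=0}^{p}A_k x^k$, where $A_k\in M_{n\times n}(\mathbb{C})$ for $k=0,1,\dots,p$. Let $\mathcal{Z}(\mathcal{D})=\{x\in\mathcal{D} : F(x) \text{ has a repeated eigenvalue}\}$. Then either $\mathcal{Z}(\mathcal{D})=\mathcal{D}$ or $\mathcal{Z}(\mathcal{D})$ is finite.
   Context: $M_{n\times n}(\mathbb{C})$ denotes the set of $n\times n$ complex matrices. A matrix has a repeated eigenvalue if some eigenvalue has algebraic multiplicity at least $2$. *)

From HB Require Import structures.
From mathcomp Require Import all_boot all_order all_algebra.
From mathcomp Require Import complex.
From mathcomp Require Import classical_sets cardinality reals.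
Set Implicit Arguments. Unset Strict Implicit. Unset Printing Implicit Defensive.
Import Order.TTheory GRing.Theory Num.Theory.
Local Open Scope ring_scope.

Definition has_repeated_eigenvalue (K : fieldType) (n : nat) (M : 'M[K]_n) : Prop :=
  exists a : K, (1 < mup a (char_poly M))%N.

Definition mxpoly_eval (K : fieldType) (n p : nat) (A : 'I_p.+1 -> 'M[K]_n) (x : K)
  : 'M[K]_n := \sum_(k < p.+1) x ^+ k *: A k.

(* The eigenvalues of F(x) are the roots of its characteristic polynomial
   chi_x, which has a repeated root exactly when it is not separable, i.e. when
   res(chi_x, chi_x') = 0.  Taking the characteristic polynomial of F over K[X]
   and its resultant with its derivative yields one polynomial Delta with
   Delta(x) = res(chi_x, chi_x'): chi is monic and, in characteristic 0 and for
   n >= 1, chi' has the nonzero constant leading coefficient n, so evaluation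
   at x commutes with the Sylvester determinant.  Hence Z is D when Delta = 0 and lies in the
   finite root set of Delta otherwise. *)

From HB Require Import structures.
From mathcomp Require Import all_boot all_order all_algebra separable.
From mathcomp Require Import complex.
From mathcomp Require Import boolp classical_sets cardinality reals.
Set Implicit Arguments. Unset Strict Implicit. Unset Printing Implicit Defensive.
Import Order.TTheory GRing.Theory Num.Theory.
Local Open Scope ring_scope.
Local Open Scope classical_set_scope.

Lemma resultant_deriv_eq0 (R : fieldType) (q : {poly R}) : q != 0 ->
  (resultant q q^`() == 0) = ~~ separable_poly q.
Proof.
move=> q0; rewrite resultant_eq0 unlock coprimep_def ltn_neqAle eq_sym.
by rewrite size_poly_gt0 gcdp_eq0 negb_and q0 andbT.
Qed.

Lemma separable_polyPn (C : closedFieldType) (q : {poly C}) : q != 0 ->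
  reflect (exists a, 1 < mup a q)%N (~~ separable_poly q).
Proof.
move=> q0; have [r Dq] := closed_field_poly_normal q.
have lq0 : lead_coef q != 0 by rewrite lead_coef_eq0.
have mupE a : mup a q = count_mem a r.
  by rewrite Dq -mul_polyC mupMr ?rootC // mu_prod_XsubC.
have -> : separable_poly q = uniq r.
  by rewrite Dq (eqp_separable (eqp_scale _ lq0)) separable_prod_XsubC.
apply: (iffP idP) => [r_not_uniq | [a]]; last first.
  by rewrite mupE; apply: contraL => /count_uniq_mem->; case: (_ \in _).
apply: contraNP r_not_uniq => no_rep; apply: count_mem_uniq => a.
have : (mup a q <= 1)%N by rewrite leqNgt; apply/negP => rep; apply: no_rep; exists a.
by rewrite -has_pred1 has_count -mupE; case: (mup a q) => [|[|]].
Qed.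

Lemma finite_set_root (R : idomainType) (q : {poly R}) : q != 0 ->
  finite_set [set x | root q x].
Proof.
elim: {q}_.+1 {-2}q (ltnSn (size q)) => // m IHm q lt_q_m q0.
have [[a qa]|no_root] := pselect (exists a, root q a); last first.
  by apply: (@sub_finite_set _ _ set0) => // x qx; apply: no_root; exists x.
have [r Dq] := factor_theorem _ _ qa.
have r0 : r != 0 by apply: contraNneq q0 => r0; rewrite Dq r0 mul0r.
apply: (@sub_finite_set _ _ (a |` [set x | root r x])).
  by move=> x /=; rewrite Dq rootM root_XsubC => /orP[|/eqP]; [right|left].
rewrite finite_setU; split; first exact: finite_set1.
apply: (IHm r _ r0); rewrite -ltnS (leq_trans _ lt_q_m) //.
by rewrite Dq size_mul ?polyXsubC_eq0 // size_XsubC addn2.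
Qed.

Lemma lead_coef_deriv_monic (R : nzRingType) n (q : {poly R}) :
  q \is monic -> size q = n.+2 -> n.+1%:R != 0 :> R ->
  lead_coef q^`() = n.+1%:R.
Proof.
move=> q_monic size_q n1_neq0.
have coef_n : q^`()`_n = n.+1%:R.
  rewrite coef_deriv -[q`_n.+1]/(q`_(n.+2).-1) -size_q -lead_coefE.
  by rewrite (monicP q_monic).
have size_dq : size q^`() = n.+1.
  apply/eqP; rewrite eqn_leq -ltnS -size_q lt_size_deriv ?monic_neq0 //=.
  by rewrite ltnNge; apply: contra n1_neq0 => /(nth_default 0); rewrite coef_n => ->.
by rewrite lead_coefE size_dq.
Qed.

Lemma repeated_eigenvalueP (C : closedFieldType) n (M : 'M[C]_n) :
  reflect (has_repeated_eigenvalue M)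
          (resultant (char_poly M) (char_poly M)^`() == 0).
Proof.
have chi0 : char_poly M != 0 by rewrite monic_neq0 ?char_poly_monic.
by rewrite resultant_deriv_eq0 //; apply: separable_polyPn.
Qed.

Lemma no_repeated_eigenvalue_mx0 (K : fieldType) (M : 'M[K]_0) :
  ~ has_repeated_eigenvalue M.
Proof.
have chi0 : char_poly M != 0 by rewrite monic_neq0 ?char_poly_monic.
case=> a; rewrite mup_geq // => /(dvdp_leq chi0).
by rewrite size_exp_XsubC size_char_poly.
Qed.

Section MatrixPolynomial.
Variables (K : fieldType) (n p : nat) (A : 'I_p.+1 -> 'M[K]_n).

Definition mxpoly_mx : 'M[{poly K}]_n :=
  \matrix_(i, j) \sum_(k < p.+1) (A k i j)%:P * 'X^k.

Lemma map_mxpoly_mx_horner x : map_mx (horner_eval x) mxpoly_mx = mxpoly_eval A x.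
Proof.
apply/matrixP => i j; rewrite !mxE summxE horner_evalE horner_sum.
by apply: eq_bigr => k _; rewrite !mxE !hornerE mulrC.
Qed.

Definition eigen_discriminant : {poly K} :=
  resultant (char_poly mxpoly_mx) (char_poly mxpoly_mx)^`().

End MatrixPolynomial.

Lemma horner_eigen_discriminant (K : numFieldType) n p (A : 'I_p.+1 -> 'M[K]_n.+1) x :
  (eigen_discriminant A).[x] =
    resultant (char_poly (mxpoly_eval A x)) (char_poly (mxpoly_eval A x))^`().
Proof.
have chi_monic := char_poly_monic (mxpoly_mx A).
rewrite -horner_evalE map_resultant.
- by rewrite -deriv_map map_char_poly map_mxpoly_mx_horner.
- by rewrite (monicP chi_monic) rmorph1 oner_eq0.
rewrite (@lead_coef_deriv_monic _ n) ?size_char_poly //.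
  by rewrite rmorph_nat pnatr_eq0.
by rewrite -polyC_natr polyC_eq0 pnatr_eq0.
Qed.

Theorem theorem3p3 (R : realType) (n p : nat) (A : 'I_p.+1 -> 'M[R[i]]_n)
    (D : set R[i]) :
  let Z := [set x | D x /\ has_repeated_eigenvalue (mxpoly_eval A x)] in
  Z = D \/ finite_set Z.
Proof.
move=> Z; case: n A @Z => [|n] A Z.
  by right; apply: (@sub_finite_set _ _ set0) => // x [_ /no_repeated_eigenvalue_mx0].
have [discr0 | discr_neq0] := eqVneq (eigen_discriminant A) 0.
  left; apply/seteqP; split=> [x []//|x Dx]; split=> //.
  by apply/repeated_eigenvalueP; rewrite -horner_eigen_discriminant discr0 horner0.
right; apply: sub_finite_set (finite_set_root discr_neq0) => x [_].
by move/repeated_eigenvalueP; rewrite /= rootE horner_eigen_discriminant.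
Qed.
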